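(* Let $\Gamma_0$ be a nonempty finite set of formulas over $\Sigma^\circ$ closed under subformulas, and let $\nu_0:\Gamma_0\to\{T,t,F\}$ satisfy: (1) if $\#\beta\in\Gamma_0$ for $\#\in\{\neg,\circ\}$, then $\nu_0(\#\beta)\in\tilde\#\nu_0(\beta)$; (2) if $\varphi\#\psi\in\Gamma_0$ for $\#\in\{\wedge,\vee,\to\}$, then $\nu_0(\varphi\#\psi)\in\nu_0(\varphi)\tilde\#\nu_0(\psi)$; (3) if $\alpha\wedge\neg\alpha\in\Gamma_0$ and $\nu_0(\alpha)=t$, then $\nu_0(\alpha\wedge\neg\alpha)=T$. Then there exists $\nu\in\mathcal{F}_{\bf Cila}$ with $\nu(\alpha)=\nu_0(\alpha)$ for all $\alpha\in\Gamma_0$.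
   Context: $\Sigma^\circ$ has unary $\neg,\circ$ and binary $\wedge,\vee,\to$; formulas over a denumerable set of variables. $\mathcal{A}_{\bf Cila}$ is the $\Sigma^\circ$-multialgebra with universe $\{F,t,T\}$, $D=\{t,T\}$, and: $F\tilde\vee F=\{F\}$, $F\tilde\vee T=T\tilde\vee F=T\tilde\vee T=\{T\}$, $x\tilde\vee y=D$ whenever $t\in\{x,y\}$; $x\tilde\wedge y=\{F\}$ if $F\in\{x,y\}$, $T\tilde\wedge T=\{T\}$, $t\tilde\wedge t=t\tilde\wedge T=T\tilde\wedge t=D$; $\tilde\neg F=\{T\}$, $\tilde\neg t=D$, $\tilde\neg T=\{F\}$; $F\tilde\to F=F\tilde\to T=T\tilde\to T=\{T\}$, $t\tilde\to F=T\tilde\to F=\{F\}$, $x\tilde\to t=D$ for all $x$, $t\tilde\to T=D$; $\tilde\circ F=\tilde\circ T=\{T\}$, $\tilde\circ t=\{F\}$. A valuation is a map $\nu$ from all formulas to $\{F,t,T\}$ with $\nu(\#\alpha)\in\tilde\#\nu(\alpha)$ and $\nu(\alpha\#\beta)\in\nu(\alpha)\tilde\#\nu(\beta)$. $\mathcal{F}_{\bf Cila}$ is the set of valuations with $\nu(\alpha)=t\Rightarrow\nu(\alpha\wedge\neg\alpha)=T$ for every formula $\alpha$. *)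

From Stdlib Require Import List.
Import ListNotations.

Inductive formula : Type :=
| Var : nat -> formula
| Neg : formula -> formula
| Circ : formula -> formula
| And : formula -> formula -> formula
| Or : formula -> formula -> formula
| Imp : formula -> formula -> formula.

Inductive V3 : Type := vF | vt | vT.

(* Multioperations, as predicates: op x y z  means  z \in x ~op y. *)
Definition designated (z : V3) : Prop := z = vt \/ z = vT.

Definition tor (x y z : V3) : Prop :=
  match x, y with
  | vF, vF => z = vF
  | vt, _ | _, vt => designated z
  | _, _ => z = vT
  end.

Definition tand (x y z : V3) : Prop :=
  match x, y with
  | vF, _ | _, vF => z = vF
  | vT, vT => z = vT
  | _, _ => designated z
  end.

Definition tneg (x z : V3) : Prop :=
  match x with
  | vF => z = vT
  | vt => designated z
  | vT => z = vF
  end.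

Definition timp (x y z : V3) : Prop :=
  match x, y with
  | _, vt => designated z
  | vF, _ => z = vT
  | vT, vT => z = vT
  | _, vF => z = vF
  | vt, vT => designated z
  end.

Definition tcirc (x z : V3) : Prop :=
  match x with
  | vt => z = vF
  | _ => z = vT
  end.

Definition valuation (nu : formula -> V3) : Prop :=
  forall a b : formula,
    tneg (nu a) (nu (Neg a)) /\
    tcirc (nu a) (nu (Circ a)) /\
    tand (nu a) (nu b) (nu (And a b)) /\
    tor (nu a) (nu b) (nu (Or a b)) /\
    timp (nu a) (nu b) (nu (Imp a b)).

Definition in_F_Cila (nu : formula -> V3) : Prop :=
  valuation nu /\
  forall a : formula, nu a = vt -> nu (And a (Neg a)) = vT.

Definition subformula_closed (G : list formula) : Prop :=
  forall f, In f G ->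
    match f with
    | Var _ => True
    | Neg a | Circ a => In a G
    | And a b | Or a b | Imp a b => In a G /\ In b G
    end.

From Stdlib Require Import List Arith.

(* We extend it by
   structural recursion: formulas of G keep their value; any other formula
   receives a value chosen deterministically from the multioperation applied
   to the (already extended) values of its immediate subformulas, and
   variables outside G receive F. *)

Definition formula_eq_dec (x y : formula) : {x = y} + {x <> y}.
Proof. decide equality; apply Nat.eq_dec. Defined.

Definition neg_choice (x : V3) : V3 := match x with vT => vF | _ => vT end.
Definition circ_choice (x : V3) : V3 := match x with vt => vF | _ => vT end.
Definition and_choice (x y : V3) : V3 :=
  match x, y with vF, _ | _, vF => vF | _, _ => vT end.
Definition or_choice (x y : V3) : V3 :=
  match x, y with vF, vF => vF | _, _ => vT end.
Definition imp_choice (x y : V3) : V3 :=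
  match x, y with vT, vF | vt, vF => vF | _, _ => vT end.

Lemma neg_choice_sound (x : V3) : tneg x (neg_choice x).
Proof. destruct x; cbv; auto. Qed.

Lemma circ_choice_sound (x : V3) : tcirc x (circ_choice x).
Proof. destruct x; cbv; auto. Qed.

Lemma and_choice_sound (x y : V3) : tand x y (and_choice x y).
Proof. destruct x, y; cbv; auto. Qed.

Lemma or_choice_sound (x y : V3) : tor x y (or_choice x y).
Proof. destruct x, y; cbv; auto. Qed.

Lemma imp_choice_sound (x y : V3) : timp x y (imp_choice x y).
Proof. destruct x, y; cbv; auto. Qed.

(* The conjunction choice is T on two non-F arguments; in particular it never
   picks t, which is what the Cila restriction needs. *)
Lemma and_choice_nonF (x y : V3) : x <> vF -> y <> vF -> and_choice x y = vT.
Proof. destruct x, y; simpl; congruence. Qed.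

Lemma tneg_t_nonF (z : V3) : tneg vt z -> z <> vF.
Proof. intros [-> | ->]; discriminate. Qed.

Fixpoint extend (G : list formula) (nu0 : formula -> V3) (f : formula) : V3 :=
  if in_dec formula_eq_dec f G then nu0 f else
  match f with
  | Var _ => vF
  | Neg a => neg_choice (extend G nu0 a)
  | Circ a => circ_choice (extend G nu0 a)
  | And a b => and_choice (extend G nu0 a) (extend G nu0 b)
  | Or a b => or_choice (extend G nu0 a) (extend G nu0 b)
  | Imp a b => imp_choice (extend G nu0 a) (extend G nu0 b)
  end.

Section Extension.

Variable G : list formula.
Variable nu0 : formula -> V3.
Local Notation nu := (extend G nu0).

Lemma extend_agrees (f : formula) : In f G -> nu f = nu0 f.
Proof.
  intro Hf; destruct f; simpl;
    destruct (in_dec formula_eq_dec _ G); tauto.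
Qed.

Hypothesis G_closed : subformula_closed G.
Hypothesis neg_ok : forall b, In (Neg b) G -> tneg (nu0 b) (nu0 (Neg b)).
Hypothesis circ_ok : forall b, In (Circ b) G -> tcirc (nu0 b) (nu0 (Circ b)).
Hypothesis and_ok :
  forall p q, In (And p q) G -> tand (nu0 p) (nu0 q) (nu0 (And p q)).
Hypothesis or_ok :
  forall p q, In (Or p q) G -> tor (nu0 p) (nu0 q) (nu0 (Or p q)).
Hypothesis imp_ok :
  forall p q, In (Imp p q) G -> timp (nu0 p) (nu0 q) (nu0 (Imp p q)).

(* Inside G the local conditions apply (subformulas are in G by closure);
   outside G the value is given by a sound choice function. *)
Lemma extend_valuation : valuation nu.
Proof.
  intros a b; repeat split; simpl.
  - destruct (in_dec formula_eq_dec (Neg a) G) as [i | _].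
    + pose proof (G_closed _ i) as Ha.
      rewrite (extend_agrees _ Ha); auto.
    + apply neg_choice_sound.
  - destruct (in_dec formula_eq_dec (Circ a) G) as [i | _].
    + pose proof (G_closed _ i) as Ha.
      rewrite (extend_agrees _ Ha); auto.
    + apply circ_choice_sound.
  - destruct (in_dec formula_eq_dec (And a b) G) as [i | _].
    + destruct (G_closed _ i) as [Ha Hb].
      rewrite (extend_agrees _ Ha), (extend_agrees _ Hb); auto.
    + apply and_choice_sound.
  - destruct (in_dec formula_eq_dec (Or a b) G) as [i | _].
    + destruct (G_closed _ i) as [Ha Hb].
      rewrite (extend_agrees _ Ha), (extend_agrees _ Hb); auto.
    + apply or_choice_sound.
  - destruct (in_dec formula_eq_dec (Imp a b) G) as [i | _].
    + destruct (G_closed _ i) as [Ha Hb].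
      rewrite (extend_agrees _ Ha), (extend_agrees _ Hb); auto.
    + apply imp_choice_sound.
Qed.

Hypothesis restriction_ok :
  forall a, In (And a (Neg a)) G -> nu0 a = vt -> nu0 (And a (Neg a)) = vT.

(* The Cila restriction: inside G it is the hypothesis; outside G the value of
   a /\ ~a is the conjunction choice on t and a non-F value, hence T. *)
Lemma extend_restriction (a : formula) : nu a = vt -> nu (And a (Neg a)) = vT.
Proof.
  intro Ha.
  destruct (in_dec formula_eq_dec (And a (Neg a)) G) as [i | n].
  - destruct (G_closed _ i) as [Hin _].
    rewrite (extend_agrees _ i); apply restriction_ok; auto.
    rewrite <- (extend_agrees _ Hin); exact Ha.
  - assert (Hneg : tneg (nu a) (nu (Neg a))) by apply extend_valuation, a.
    rewrite Ha in Hneg.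
    simpl; destruct (in_dec formula_eq_dec (And a (Neg a)) G) as [i | _];
      [contradiction |].
    apply and_choice_nonF; [rewrite Ha; discriminate |].
    exact (tneg_t_nonF _ Hneg).
Qed.

End Extension.

Theorem mainTheorem8 (G0 : list formula) (nu0 : formula -> V3) :
  G0 <> nil ->
  subformula_closed G0 ->
  (forall b, In (Neg b) G0 -> tneg (nu0 b) (nu0 (Neg b))) ->
  (forall b, In (Circ b) G0 -> tcirc (nu0 b) (nu0 (Circ b))) ->
  (forall p q, In (And p q) G0 -> tand (nu0 p) (nu0 q) (nu0 (And p q))) ->
  (forall p q, In (Or p q) G0 -> tor (nu0 p) (nu0 q) (nu0 (Or p q))) ->
  (forall p q, In (Imp p q) G0 -> timp (nu0 p) (nu0 q) (nu0 (Imp p q))) ->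
  (forall a, In (And a (Neg a)) G0 -> nu0 a = vt -> nu0 (And a (Neg a)) = vT) ->
  exists nu : formula -> V3,
    in_F_Cila nu /\ forall a, In a G0 -> nu a = nu0 a.
Proof.
  intros _ Hclosed Hneg Hcirc Hand Hor Himp Hrestr.
  exists (extend G0 nu0); split; [split |].
  - exact (extend_valuation G0 nu0 Hclosed Hneg Hcirc Hand Hor Himp).
  - exact (extend_restriction G0 nu0 Hclosed Hneg Hcirc Hand Hor Himp Hrestr).
  - exact (extend_agrees G0 nu0).
Qed.
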